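(* Let $s\ge1$ and $T\in\mathcal{T}(s)$. Then the tableau $D_{2,s}(T)$ satisfies conditions (C1)--(C5); i.e. $D_{2,s}(T)\in B(k\varpi_2)$ for some $0\le k\le s$.
   Context: Let $n\ge4$. Alphabet: $1<2<\dots<n-1<\{n,\bar n\}<\overline{n-1}<\dots<\bar2<\bar1$, a partial order in which $n$ and $\bar n$ are incomparable; set $\bar{\bar i}=i$. A tableau of shape $(k,k)$ is a sequence of $k$ columns, column $j$ with top entry $a_j$ and bottom entry $b_j$, written $\binom{a_1}{b_1}\cdots\binom{a_k}{b_k}$ ($\binom{x}{y}$ denotes a column, not a binomial coefficient). Conditions: (C1) $a_j\le a_{j+1}$ and $b_j\le b_{j+1}$ for all $j$; (C2) $b_j\not\le a_j$; (C3) no $j$ and letter $x$ with $a_j=a_{j+1}=x$, $b_{j+1}=\bar x$, and no $j,x$ with $a_j=x$, $b_j=b_{j+1}=\bar x$; (C4) no $j<j'$ with columns $j,j'$ equal to $\binom{n-1}{n},\binom{n}{\overline{n-1}}$ respectively, nor to $\binom{n-1}{\bar n},\binom{\bar n}{\overline{n-1}}$; (C5) no column $\binom{1}{\bar1}$. $B(k\varpi_2)$ = tableaux of shape $(k,k)$ satisfying (C1)--(C5) ($B(0)$ consists of the empty tableau); $\mathcal{T}(s)$ = tableaux of shape $(s,s)$ satisfying (C1),(C2),(C4). For $T\in\mathcal{T}(s)\setminus B(s\varpi_2)$ not equal to $\binom{1}{\bar1}\cdots\binom{1}{\bar1}$, there are a unique letter $a\in\{1,\dots,n,\bar n\}$ and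 $m\ge1$ such that $T$ contains consecutive columns of one of the forms (i) $\binom{a}{b_1}\binom{a}{\bar a}^m\binom{c_1}{d_1}$ with $b_1\ne\bar a$ and ($c_1\ne a$ or $d_1\ne\bar a$); (ii) $\binom{b_2}{c_2}\binom{a}{\bar a}^m\binom{d_2}{\bar a}$ with $d_2\neq a$ and ($b_2\ne a$ or $c_2\ne\bar a$); (iii) $\binom{b_3}{c_3}\binom{a}{\bar a}^{m+1}\binom{d_3}{e_3}$ with $b_3\ne a$, $e_3\ne\bar a$ (bounding columns may be absent at the ends of $T$); here $\binom{a}{\bar a}^m$ means $m$ consecutive columns $\binom{a}{\bar a}$. The drop map $D_{2,s}$ is: $D_{2,s}(\binom{1}{\bar1}\cdots\binom{1}{\bar1})$ is the empty tableau; $D_{2,s}(T)=T$ if $T\in B(s\varpi_2)$; otherwise $D_{2,s}(T)$ is obtained from $T$ by deleting $m$ of the columns $\binom{a}{\bar a}$ of this configuration (all $m$ in cases (i),(ii); $m$ of the $m+1$ in case (iii)). *)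

From mathcomp Require Import all_boot.
Set Implicit Arguments. Unset Strict Implicit. Unset Printing Implicit Defensive.

(* A letter of the type-D_n crystal alphabet is a pair (i, barred):
   (i, false) is the letter i, (i, true) is the letter \bar i, with 1 <= i <= n. *)
Definition letter := (nat * bool)%type.
Definition valid_letter (n : nat) (x : letter) : bool := (0 < x.1) && (x.1 <= n).
Definition barL (x : letter) : letter := (x.1, ~~ x.2).

(* position in the chain 1 < 2 < ... < n-1 < {n, nbar} < (n-1)bar < ... < 1bar *)
Definition rk (n : nat) (x : letter) : nat := if x.2 then (n.*2).+1 - x.1 else x.1.

(* the partial order: n and \bar n are incomparable *)
Definition leL (n : nat) (x y : letter) : bool :=
  (x == y) || ((rk n x < rk n y) && ~~ ((x.1 == n) && (y.1 == n))).

(* a column (top, bottom); a tableau of shape (k,k) = list of its k columns *)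
Definition column := (letter * letter)%type.
Definition tableau := seq column.

Definition valid_tab (n : nat) (T : tableau) : Prop :=
  all (fun c => valid_letter n c.1 && valid_letter n c.2) T.

Definition C1 (n : nat) (T : tableau) : Prop :=
  sorted (fun c d : column => leL n c.1 d.1 && leL n c.2 d.2) T.

Definition C2 (n : nat) (T : tableau) : Prop :=
  all (fun c : column => ~~ leL n c.2 c.1) T.

Definition C3 (T : tableau) : Prop :=
  all (fun p : column * column =>
         ~~ ((p.1.1 == p.2.1) && (p.2.2 == barL p.1.1)) &&
         ~~ ((p.1.2 == p.2.2) && (p.1.2 == barL p.1.1)))
      (zip T (behead T)).

Definition dflt_col : column := ((0, false), (0, false)).

Definition C4 (n : nat) (T : tableau) : Prop :=
  forall j j', j < j' < size T ->
    ~ (nth dflt_col T j = ((n.-1, false), (n, false)) /\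
       nth dflt_col T j' = ((n, false), (n.-1, true))) /\
    ~ (nth dflt_col T j = ((n.-1, false), (n, true)) /\
       nth dflt_col T j' = ((n, true), (n.-1, true))).

Definition col11 : column := ((1, false), (1, true)).

Definition C5 (T : tableau) : Prop := all (fun c => c != col11) T.

Definition inB (n k : nat) (T : tableau) : Prop :=
  size T = k /\ valid_tab n T /\ C1 n T /\ C2 n T /\ C3 T /\ C4 n T /\ C5 T.

Definition inTcal (n s : nat) (T : tableau) : Prop :=
  size T = s /\ valid_tab n T /\ C1 n T /\ C2 n T /\ C4 n T.

Definition aa (a : letter) : column := (a, barL a).

(* The three configurations (i), (ii), (iii), together with the result of
   deleting the m columns (a, \bar a).  T = p ++ (configuration) ++ q. *)
Definition drop_config (T T' : tableau) (a : letter) (m : nat) : Prop :=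
  exists p q : tableau,
    (* (i): left column (a,b1) present, right column (c1,d1) possibly absent *)
    (exists b1 : letter,
        b1 != barL a /\ (if q is cd :: _ then cd != aa a else true) /\
        T = p ++ (a, b1) :: nseq m (aa a) ++ q /\
        T' = p ++ (a, b1) :: q)
    \/
    (* (ii): left column (b2,c2) possibly absent, right column (d2, \bar a) present *)
    (exists d2 : letter,
        d2 != a /\ (if p is _ :: _ then last dflt_col p != aa a else true) /\
        T = p ++ nseq m (aa a) ++ (d2, barL a) :: q /\
        T' = p ++ (d2, barL a) :: q)
    \/
    (* (iii): both bounding columns possibly absent; keep one of the m+1 *)
    ((if p is _ :: _ then (last dflt_col p).1 != a else true) /\
     (if q is cd :: _ then cd.2 != barL a else true) /\
     T = p ++ nseq m.+1 (aa a) ++ q /\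
     T' = p ++ aa a :: q).

(* D_{2,s}(T) = T' (relational form of the drop map) *)
Definition DropRel (n s : nat) (T T' : tableau) : Prop :=
  (T = nseq s col11 /\ T' = [::])
  \/ (inB n s T /\ T' = T)
  \/ (~ inB n s T /\ T <> nseq s col11 /\
      exists (a : letter) (m : nat),
        valid_letter n a /\ (~~ a.2 || (a.1 == n)) /\ 1 <= m /\
        drop_config T T' a m).

(* Call a column of the form (a, ā) an aa-column.  Away from aa-columns,
   (C3) and (C5) hold automatically.  Since x ≤ y and x̄ ≤ ȳ force x = y, all
   aa-columns of a tableau satisfying (C1) coincide, and by antisymmetry they
   form one contiguous block.  Deleting columns preserves (C1), (C2) and (C4);
   so in cases (i) and (ii), which delete the whole block, the result lies in
   B(kϖ₂).  In case (iii) a single column (a, ā) survives, and the conditions on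
   its neighbours are exactly what (C3) demands there; the column (1, 1̄),
   extremal in both rows, can survive only alone, i.e. when T consists of such
   columns.  Conversely, the neighbours of the block decide which configuration
   applies whenever T ∉ B(sϖ₂). *)

From mathcomp Require Import all_boot.
From mathcomp Require Import zify.
From Stdlib Require Import Classical.
Set Implicit Arguments. Unset Strict Implicit. Unset Printing Implicit Defensive.

Section LetterOrder.
Variable n : nat.

Lemma leL_trans : transitive (leL n).
Proof.
move=> y x z /orP[/eqP-> //|/andP[xy nxy]].
case/orP=> [/eqP<-|/andP[yz _]]; first by rewrite /leL xy nxy orbT.
apply/orP; right; rewrite (ltn_trans xy yz) /=.
apply/negP=> /andP[/eqP x1 /eqP z1]; move: xy yz {nxy}; rewrite /rk.
by case: x x1 => i [] /= ->; case: z z1 => k [] /= ->; lia.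
Qed.

Lemma leL_anti : antisymmetric (leL n).
Proof.
move=> x y /andP[/orP[/eqP//|/andP[xy _]] /orP[/eqP//|/andP[yx _]]].
by move: (ltn_trans xy yx); rewrite ltnn.
Qed.

Lemma barLK : involutive barL.
Proof. by case=> i b; rewrite /barL /= negbK. Qed.

Lemma rk_barL x : valid_letter n x -> rk n (barL x) = (n.*2).+1 - rk n x.
Proof. by case: x => i [] /andP[/= i_gt0 i_le]; rewrite /rk /=; lia. Qed.

Lemma leL_barL_eq x y : valid_letter n x -> valid_letter n y ->
  leL n x y -> leL n (barL x) (barL y) -> x = y.
Proof.
move=> vx vy /orP[/eqP//|/andP[xy _]] /orP[/eqP/(can_inj barLK)//|/andP[]].
have: rk n y <= n.*2 by case: y vy {xy} => j [] /andP[]; rewrite /rk /=; lia.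
by rewrite !rk_barL //; lia.
Qed.

Lemma leL_one x : valid_letter n x -> leL n x (1, false) -> x = (1, false).
Proof.
case: x => i b /andP[/= i_gt0 i_le] /orP[/eqP//|/andP[]].
by rewrite /rk /=; case: b; lia.
Qed.

Lemma leL_one_bar x : valid_letter n x -> leL n (1, true) x -> x = (1, true).
Proof.
case: x => i b /andP[/= i_gt0 i_le] /orP[/eqP//|/andP[]].
by rewrite /rk /=; case: b; lia.
Qed.

Lemma unbarred_of_nleL_barL a : valid_letter n a -> ~~ leL n (barL a) a ->
  ~~ a.2 || (a.1 == n).
Proof.
case: a => i [] //= /andP[/= i_gt0 i_le]; rewrite /leL /rk /= negb_or.
by case: eqP => //= _; lia.
Qed.

End LetterOrder.

Section Pairwise.
Variables (T : eqType) (r : rel T).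

Lemma pairwise_cat_mem s1 s2 x y :
  pairwise r (s1 ++ s2) -> x \in s1 -> y \in s2 -> r x y.
Proof. by rewrite pairwise_cat => /and3P[/allrelP + _ _]; apply. Qed.

Lemma pairwise_mem_total s x y : reflexive r -> pairwise r s ->
  x \in s -> y \in s -> r x y || r y x.
Proof.
move=> r_refl; elim: s => //= z s IH /andP[/allP zs pws].
rewrite !in_cons => /orP[/eqP->|xs] /orP[/eqP->|ys]; rewrite ?r_refl ?zs ?orbT //.
exact: IH.
Qed.

Hypothesis r_anti : antisymmetric r.

Lemma pairwise_between s1 x s2 y :
  pairwise r (s1 ++ x :: s2) -> y \in s1 -> y \in s2 -> x = y.
Proof.
rewrite pairwise_cat pairwise_cons => /and3P[/allrelP yx _ /andP[/allP xy _]] y1 y2.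
by apply: r_anti; rewrite xy // yx // mem_head.
Qed.

(* The [: Prop] casts make these [if]s Prop-valued matches, which is how they
   occur in [drop_config]; [is_true (if ... then ... else true)] is not
   convertible to that form. *)
Lemma notin_head s1 q y : pairwise r (s1 ++ q) -> y \in s1 ->
  (if q is h :: _ then h != y else true : Prop) -> y \notin q.
Proof.
case: q => // h q pw y1 hy; rewrite in_cons negb_or eq_sym hy /=.
by apply: contra hy => y2; rewrite (pairwise_between pw y1 y2).
Qed.

Lemma notin_last x0 p s2 y : pairwise r (p ++ s2) -> y \in s2 ->
  (if p is _ :: _ then last x0 p != y else true : Prop) -> y \notin p.
Proof.
case: p => // z p + y2 /= ly; rewrite lastI cat_rcons mem_rcons => pw.
rewrite in_cons negb_or eq_sym ly /=.
by apply: contra ly => y1; rewrite (pairwise_between pw y1 y2).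
Qed.

End Pairwise.

Lemma split_nseq_head (T : eqType) (c : T) w :
  exists k q, w = nseq k c ++ q /\ (if q is h :: _ then h != c else true).
Proof.
elim: w => [|x w [k [q [-> hq]]]]; first by exists 0, [::].
have [->|xc] := eqVneq x c; first by exists k.+1, q.
by exists 0, (x :: nseq k c ++ q).
Qed.

Definition leC n : rel column := fun c d => leL n c.1 d.1 && leL n c.2 d.2.

Definition is_aa (c : column) : bool := c == aa c.1.

Lemma is_aa_aa a : is_aa (aa a).
Proof. exact: eqxx. Qed.

Lemma leC_refl n : reflexive (leC n).
Proof. by move=> c; rewrite /leC /leL !eqxx. Qed.

Lemma leC_trans n : transitive (leC n).
Proof.
move=> d c e /andP[c1 c2] /andP[d1 d2].
by rewrite /leC (leL_trans c1 d1) (leL_trans c2 d2).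
Qed.

Lemma leC_anti n : antisymmetric (leC n).
Proof.
move=> [x y] [z w] /andP[/andP[/= xz yw] /andP[/= zx wy]].
by rewrite (leL_anti (introT andP (conj xz zx))) (leL_anti (introT andP (conj yw wy))).
Qed.

Lemma C1_pairwise n T : C1 n T -> pairwise (leC n) T.
Proof. by rewrite /C1 sorted_pairwise //; exact: leC_trans. Qed.

Lemma aa_mem_uniq n T a b : valid_tab n T -> pairwise (leC n) T ->
  aa a \in T -> aa b \in T -> a = b.
Proof.
move=> vT pT aT bT; have /andP[va _] := allP vT _ aT; have /andP[vb _] := allP vT _ bT.
case/orP: (pairwise_mem_total (@leC_refl n) pT aT bT) => /andP[ab bab].
  exact: leL_barL_eq ab bab.
by apply: esym; exact: leL_barL_eq ab bab.
Qed.

Definition C4_rel n : rel column := fun c d =>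
  ~~ ((c == ((n.-1, false), (n, false))) && (d == ((n, false), (n.-1, true)))) &&
  ~~ ((c == ((n.-1, false), (n, true))) && (d == ((n, true), (n.-1, true)))).

Lemma C4_pairwise n T : C4 n T <-> pairwise (C4_rel n) T.
Proof.
split=> [C4T | /(pairwiseP dflt_col) pT j j' /andP[jj' j'T]].
  apply/(pairwiseP dflt_col) => j j' jT j'T jj'.
  have [ne1 ne2] := C4T j j' (introT andP (conj jj' j'T)).
  by apply/andP; split; apply/negP => /andP[/eqP e /eqP e']; [apply: ne1 | apply: ne2].
have /andP[/negP ne1 /negP ne2] := pT j j' (ltn_trans jj' j'T) j'T jj'.
by split=> -[e e']; [apply: ne1 | apply: ne2]; rewrite e e' !eqxx.
Qed.

Lemma inTcal_subseq n s T T' : subseq T' T -> inTcal n s T -> inTcal n (size T') T'.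
Proof.
move=> sub [_ [vT [C1T [C2T C4T]]]]; have subT := mem_subseq sub.
split=> //; split; first by apply/allP => c /subT/(allP vT).
split; first exact: (subseq_sorted (@leC_trans n) sub).
split; first by apply/allP => c /subT/(allP C2T).
by apply/C4_pairwise/(subseq_pairwise sub)/C4_pairwise.
Qed.

Lemma inB_nil n : inB n 0 [::].
Proof. by do 6!split=> //; move=> j j' /andP[]. Qed.

Definition C3_rel : rel column := fun c d =>
  ~~ ((c.1 == d.1) && (d.2 == barL c.1)) && ~~ ((c.2 == d.2) && (c.2 == barL c.1)).

Lemma C3_sorted T : C3 T = sorted C3_rel T.
Proof.
rewrite /C3; congr is_true; case: T => // c T.
by elim: T c => //= d T IH c; rewrite IH.
Qed.

Lemma C3_rel_nonaa c d : ~~ is_aa c -> ~~ is_aa d -> C3_rel c d.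
Proof.
case: c d => [x y] [z w]; rewrite /is_aa /C3_rel /= => ca dw.
apply/andP; split; apply/negP => /andP[/eqP e /eqP e'].
  by move: dw; rewrite -e e' eqxx.
by move: ca; rewrite e' eqxx.
Qed.

Lemma sorted_C3_nonaa T : all (predC is_aa) T -> sorted C3_rel T.
Proof.
elim: T => //= c T IH /andP[ca Ta]; rewrite path_min_sorted ?IH //.
by apply/allP => d dT; apply: C3_rel_nonaa ca (allP Ta d dT).
Qed.

Lemma C3_single_aa p a q : all (predC is_aa) p -> all (predC is_aa) q ->
  (if p is _ :: _ then (last dflt_col p).1 != a else true : Prop) ->
  (if q is cd :: _ then cd.2 != barL a else true : Prop) -> C3 (p ++ aa a :: q).
Proof.
move=> pa qa pl qh; rewrite C3_sorted.
have aq : path C3_rel (aa a) q.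
  case: q qa qh => // h q /sorted_C3_nonaa qa qh /=; apply/andP; split=> //.
  by rewrite /C3_rel /= [barL a == _]eq_sym (negbTE qh) !andbF.
case: p pa pl => // z p /sorted_C3_nonaa pa pl /=.
rewrite cat_path /= aq andbT; apply/andP; split=> //.
apply/andP; split; apply/negP => /andP[/eqP e /eqP e'].
  by rewrite e eqxx in pl.
by move: pl; rewrite (can_inj barLK (etrans (esym e) e')) eqxx.
Qed.

Lemma nonaa_neq_col11 c : ~~ is_aa c -> c != col11.
Proof. by apply: contra => /eqP->; exact: (is_aa_aa (1, false)). Qed.

Lemma inB_nonaa n s T : inTcal n s T -> all (predC is_aa) T -> inB n s T.
Proof.
move=> [sT [vT [C1T [C2T C4T]]]] Ta; do 4!split=> //.
split; first by rewrite C3_sorted; exact: sorted_C3_nonaa.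
by split=> //; apply/allP => c cT; exact: nonaa_neq_col11 (allP Ta c cT).
Qed.

Lemma col11_alone n p q :
  valid_tab n (p ++ col11 :: q) -> pairwise (leC n) (p ++ col11 :: q) ->
  (if p is _ :: _ then (last dflt_col p).1 != (1, false) else true : Prop) ->
  (if q is cd :: _ then cd.2 != (1, true) else true : Prop) -> p = [::] /\ q = [::].
Proof.
move=> vT pT pl qh; split.
  case: p vT pT pl => // z p vT pT /= pl; exfalso.
  have lT : last z p \in (z :: p) ++ col11 :: q by rewrite mem_cat mem_last.
  have /andP[l1 _] := allP vT _ lT.
  have /andP[le _] := pairwise_cat_mem pT (mem_last z p) (mem_head col11 q).
  by move: pl; rewrite (leL_one l1 le) eqxx.
case: q vT pT qh => // h q vT pT /= qh; exfalso.
have hT : h \in p ++ [:: col11, h & q] by rewrite mem_cat !in_cons eqxx !orbT.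
have /andP[_ h2] := allP vT _ hT.
move: pT; rewrite -cat_rcons => pT.
have cT : col11 \in rcons p col11 by rewrite mem_rcons mem_head.
have /andP[_ le] := pairwise_cat_mem pT cT (mem_head h q).
by move: qh; rewrite (leL_one_bar h2 le) eqxx.
Qed.

Lemma single_aa_inB n s p a q :
  inTcal n s (p ++ aa a :: q) -> all (predC is_aa) p -> all (predC is_aa) q ->
  (if p is _ :: _ then (last dflt_col p).1 != a else true : Prop) ->
  (if q is cd :: _ then cd.2 != barL a else true : Prop) ->
  inB n s (p ++ aa a :: q) \/ [/\ a = (1, false), p = [::] & q = [::]].
Proof.
move=> Tok pa qa pl qh; have [sT [vT [C1T [C2T C4T]]]] := Tok.
have [a1|a_ne1] := eqVneq a (1, false).
  by subst a; right; have [-> ->] := col11_alone vT (C1_pairwise C1T) pl qh.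
left; do 4!split=> //; split; first exact: C3_single_aa.
split=> //; apply/allP => c; rewrite mem_cat in_cons => /or3P[cp|/eqP->|cq].
- exact: nonaa_neq_col11 (allP pa c cp).
- by apply: contra_neq a_ne1 => -[].
- exact: nonaa_neq_col11 (allP qa c cq).
Qed.

Lemma aa_block_decomposition n T : valid_tab n T -> pairwise (leC n) T -> has is_aa T ->
  exists a p k q, [/\ T = p ++ nseq k.+1 (aa a) ++ q,
                      all (predC is_aa) p & all (predC is_aa) q].
Proof.
move=> + + T_aa; case: (split_find T_aa) => -[x y] p s2 /eqP[->] p_aa.
have [k [q [-> qh]]] := split_nseq_head (aa x) s2.
rewrite cat_rcons -/(aa x) => vT pT.
rewrite -all_predC in p_aa; exists x, p, k, q; split=> //.
have xT : aa x \in p ++ nseq k.+1 (aa x) ++ q by rewrite !mem_cat mem_nseq eqxx !orbT.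
have xq : aa x \notin q.
  apply: (notin_head (@leC_anti n) (s1 := p ++ nseq k.+1 (aa x)) _ _ qh).
    by rewrite -catA.
  by rewrite mem_cat mem_head orbT.
apply/allP => d dq; apply/negP => /eqP d_aa.
have dT : aa d.1 \in p ++ nseq k.+1 (aa x) ++ q by rewrite -d_aa !mem_cat dq !orbT.
by move: xq; rewrite (aa_mem_uniq vT pT xT dT) -d_aa dq.
Qed.

Lemma last_nonaa p a : all (predC is_aa) p ->
  (if p is _ :: _ then last dflt_col p != aa a else true : Prop).
Proof.
case: p => // z p /allP pa /=.
by apply: contraNneq (pa _ (mem_last z p)) => ->; exact: is_aa_aa.
Qed.

Lemma head_nonaa q a : all (predC is_aa) q ->
  (if q is h :: _ then h != aa a else true : Prop).
Proof. by case: q => // h q /andP[ha _]; apply: contraNneq ha => ->; exact: is_aa_aa. Qed.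

Lemma last_fst_cases (p : seq column) a :
  (exists p0 l, p = rcons p0 l /\ l.1 = a) \/
  (if p is _ :: _ then (last dflt_col p).1 != a else true : Prop).
Proof.
case: p => [|z p]; first by right.
have [la|] := eqVneq (last z p).1 a; last by right.
by left; exists (belast z p), (last z p); rewrite -lastI.
Qed.

Lemma head_snd_cases (q : seq column) b :
  (exists h q0, q = h :: q0 /\ h.2 = b) \/
  (if q is cd :: _ then cd.2 != b else true : Prop).
Proof.
case: q => [|h q]; first by right.
by have [hb|] := eqVneq h.2 b; [left; exists h, q | right].
Qed.

Lemma aa_block_drop_config a p k q : all (predC is_aa) p -> all (predC is_aa) q ->
  (exists T' m, 0 < m /\ drop_config (p ++ nseq k.+1 (aa a) ++ q) T' a m) \/
  [/\ k = 0, (if p is _ :: _ then (last dflt_col p).1 != a else true : Prop)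
           & (if q is cd :: _ then cd.2 != barL a else true : Prop)].
Proof.
move=> pa qa; case: (last_fst_cases p a) => [[p0 [l [Ep la]]]|pl].
  have El : l = (a, l.2) by case: l la {Ep} => /= x y ->.
  left; exists (p0 ++ (a, l.2) :: q), k.+1; split=> //; exists p0, q; left.
  exists l.2; split; last by split; [exact: head_nonaa | split=> //; rewrite Ep cat_rcons {1}El].
  have := allP pa l; rewrite Ep mem_rcons mem_head => /(_ isT).
  by apply: contraNneq => l2; rewrite El l2; exact: is_aa_aa.
case: (head_snd_cases q (barL a)) => [[h [q0 [Eq ha]]]|qh].
  have Eh : h = (h.1, barL a) by case: h ha {Eq} => /= x y ->.
  left; exists (p ++ (h.1, barL a) :: q0), k.+1; split=> //; exists p, q0; right; left.
  exists h.1; split; last by split; [exact: last_nonaa | split=> //; rewrite Eq {1}Eh].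
  have := allP qa h; rewrite Eq mem_head => /(_ isT).
  by apply: contraNneq => h1; rewrite Eh h1; exact: is_aa_aa.
case: k => [|m]; first by right.
by left; exists (p ++ aa a :: q), m.+1; split=> //; exists p, q; right; right.
Qed.

Lemma drop_config_subseq T T' a m : drop_config T T' a m -> subseq T' T.
Proof.
case=> p [q [[b1 [_ [_ [-> ->]]]]|[[d2 [_ [_ [-> ->]]]]|[_ [_ [-> ->]]]]]];
  apply: cat_subseq (subseq_refl p) _.
- exact: (cat_subseq (subseq_refl [:: _]) (suffix_subseq _ q)).
- exact: suffix_subseq.
- exact: (cat_subseq (subseq_refl [:: _]) (suffix_subseq _ q)).
Qed.

Section DropConfigurations.
Variable n : nat.

Lemma nonaa_of_aa_notin T s a : valid_tab n T -> pairwise (leC n) T -> aa a \in T ->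
  {subset s <= T} -> aa a \notin s -> all (predC is_aa) s.
Proof.
move=> vT pT aT sT aNs; apply/allP => c cs; apply/negP => /eqP c_aa.
move: (cs); rewrite c_aa => /sT cT.
by move: aNs; rewrite (aa_mem_uniq vT pT aT cT) -c_aa cs.
Qed.

Lemma config_i_aa_notin p a b1 m q :
  pairwise (leC n) (p ++ (a, b1) :: nseq m (aa a) ++ q) -> 0 < m -> b1 != barL a ->
  (if q is cd :: _ then cd != aa a else true : Prop) -> aa a \notin p ++ (a, b1) :: q.
Proof.
move=> pT m_gt0 b1a qh.
have ne : aa a != (a, b1) by apply: contra_neq b1a => -[].
rewrite mem_cat in_cons (negbTE ne) /= negb_or; apply/andP; split.
  apply: contra ne => ap; rewrite (pairwise_between (@leC_anti n) pT ap) //.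
  by rewrite mem_cat mem_nseq m_gt0 eqxx.
apply: (notin_head (@leC_anti n) (s1 := p ++ (a, b1) :: nseq m (aa a)) _ _ qh).
  by rewrite -catA.
by rewrite mem_cat in_cons mem_nseq m_gt0 eqxx !orbT.
Qed.

Lemma config_ii_aa_notin p a d2 m q :
  pairwise (leC n) (p ++ nseq m (aa a) ++ (d2, barL a) :: q) -> 0 < m -> d2 != a ->
  (if p is _ :: _ then last dflt_col p != aa a else true : Prop) ->
  aa a \notin p ++ (d2, barL a) :: q.
Proof.
move=> pT m_gt0 d2a pl.
have ne : aa a != (d2, barL a) by apply: contra_neq d2a => -[].
rewrite mem_cat in_cons (negbTE ne) /= negb_or; apply/andP; split.
  by apply: (notin_last (@leC_anti n) pT _ pl); rewrite mem_cat mem_nseq m_gt0 eqxx.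
apply: contra ne => aq; move: pT; rewrite catA => pT.
by rewrite (pairwise_between (@leC_anti n) pT _ aq) // mem_cat mem_nseq m_gt0 eqxx orbT.
Qed.

Lemma config_iii_nonaa p a m q (T := p ++ nseq m.+1 (aa a) ++ q) :
  valid_tab n T -> pairwise (leC n) T ->
  (if p is _ :: _ then (last dflt_col p).1 != a else true : Prop) ->
  (if q is cd :: _ then cd.2 != barL a else true : Prop) ->
  all (predC is_aa) p /\ all (predC is_aa) q.
Proof.
move=> vT pT pl qh; have aT : aa a \in T by rewrite /T !mem_cat mem_head orbT.
split; apply: (nonaa_of_aa_notin vT pT aT).
- by move=> c cp; rewrite /T mem_cat cp.
- apply: (notin_last (x0 := dflt_col) (@leC_anti n) pT); first by rewrite mem_head.
  by case: p pl {vT pT aT T} => // z p; apply: contra_neq => ->.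
- by move=> c cq; rewrite /T !mem_cat cq !orbT.
- apply: (notin_head (@leC_anti n) (s1 := p ++ nseq m.+1 (aa a))); first by rewrite -catA.
    by rewrite mem_cat mem_head orbT.
  by case: q qh {vT pT aT T} => // h q; apply: contra_neq => ->.
Qed.

End DropConfigurations.

Lemma drop_config_inB n s T T' a m : inTcal n s T -> T <> nseq s col11 -> 0 < m ->
  drop_config T T' a m -> inB n (size T') T'.
Proof.
move=> Tok Tn1 m_gt0 dc; have T'ok := inTcal_subseq (drop_config_subseq dc) Tok.
have subT := mem_subseq (drop_config_subseq dc).
have [sT [vT [/C1_pairwise pT _]]] := Tok.
case: dc subT T'ok => p [q [[b1 [b1a [qh [ET ET']]]]|
  [[d2 [d2a [pl [ET ET']]]]|[pl [qh [ET ET']]]]]] subT T'ok.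
- apply: (inB_nonaa T'ok (nonaa_of_aa_notin (a := a) vT pT _ subT _)).
    by rewrite ET !(mem_cat, in_cons, mem_nseq) m_gt0 eqxx !orbT.
  by rewrite ET'; apply: (config_i_aa_notin (n := n) _ m_gt0 b1a qh); rewrite -ET.
- apply: (inB_nonaa T'ok (nonaa_of_aa_notin (a := a) vT pT _ subT _)).
    by rewrite ET !(mem_cat, in_cons, mem_nseq) m_gt0 eqxx !orbT.
  by rewrite ET'; apply: (config_ii_aa_notin (n := n) _ m_gt0 d2a pl); rewrite -ET.
- rewrite ET in vT pT; have [pa qa] := config_iii_nonaa vT pT pl qh.
  rewrite ET' in T'ok *; case: (single_aa_inB T'ok pa qa pl qh) => // -[a1 p0 q0].
  by case: Tn1; rewrite -sT ET a1 p0 q0 cats0 size_nseq.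
Qed.

Lemma DropRel_inB n s T T' : inTcal n s T -> DropRel n s T T' ->
  exists k, k <= s /\ inB n k T'.
Proof.
move=> Tok [[_ ->]|[[TB ->]|[_ [Tn1 [a [m [_ [_ [m_gt0 dc]]]]]]]]].
- by exists 0; split=> //; exact: inB_nil.
- by exists s.
exists (size T'); split; last exact: drop_config_inB Tok Tn1 m_gt0 dc.
by case: Tok => <- _; exact/size_subseq/(drop_config_subseq dc).
Qed.

Lemma aa_mem_letter n s T a : inTcal n s T -> aa a \in T ->
  valid_letter n a /\ (~~ a.2 || (a.1 == n)).
Proof.
move=> [_ [vT [_ [C2T _]]]] aT; have /andP[va _] := allP vT _ aT.
by split=> //; exact: unbarred_of_nleL_barL va (allP C2T _ aT).
Qed.

Lemma DropRel_exists n s T : inTcal n s T -> exists T', DropRel n s T T'.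
Proof.
move=> Tok; have [sT [vT [/C1_pairwise pT _]]] := Tok.
have [->|Tn1] := eqVneq T (nseq s col11); first by exists [::]; left.
have [TB|TnB] := classic (inB n s T); first by exists T; right; left.
have [T_aa|] := boolP (has is_aa T); last first.
  by rewrite -all_predC => T_ok; case: TnB; exact: inB_nonaa.
have [a [p [k [q [ET pa qa]]]]] := aa_block_decomposition vT pT T_aa.
have aT : aa a \in T by rewrite ET !mem_cat mem_head orbT.
have [va a_ok] := aa_mem_letter Tok aT.
case: (aa_block_drop_config a k pa qa) => [[T' [m [m_gt0 dc]]]|[k0 pl qh]].
  by exists T'; right; right; do 2!split=> //; first exact/eqP; exists a, m; rewrite ET.
rewrite ET k0 in Tok; case: (single_aa_inB Tok pa qa pl qh) => [TB|[a1 p0 q0]].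
  by case: TnB; rewrite ET k0.
by move: Tn1; rewrite -sT ET k0 a1 p0 q0 eqxx.
Qed.

Theorem theorem4p2 (n s : nat) (T : tableau) :
  4 <= n -> 1 <= s -> inTcal n s T ->
  (exists T' : tableau, DropRel n s T T') /\
  (forall T' : tableau, DropRel n s T T' -> exists k, k <= s /\ inB n k T').
Proof.
move=> _ _ Tok; split; first exact: DropRel_exists.
by move=> T'; apply: DropRel_inB.
Qed.
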